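(* Let $E$ be an acyclic directed graph and let $G(E)$ be a dense subsemigroup of a topological semigroup $S$. Then $E(S)=\overline{E(G(E))}$ and the set $E(S)\setminus\{0\}$ is open in $S$.
   Context: All spaces are Hausdorff. $E(T)$ denotes the set of idempotents of a semigroup $T$; $0$ is the zero of $G(E)$. A directed graph $E=(E^0,E^1,r,s)$ has vertices $E^0$, edges $E^1$, source/range maps $s,r:E^1\to E^0$; paths are vertices and sequences of edges $e_1\ldots e_n$ with $r(e_i)=s(e_{i+1})$; acyclic means no path of non-zero length with equal source and range. The graph inverse semigroup $G(E)$ is the semigroup with zero $0$ generated by $E^0$, $E^1$, $E^{-1}=\{e^{-1}\mid e\in E^1\}$ subject to: for $a,b\in E^0$, $e,f\in E^1$: $ab=a$ if $a=b$, else $0$; $s(e)e=er(e)=e$; $e^{-1}s(e)=r(e)e^{-1}=e^{-1}$; $e^{-1}f=r(e)$ if $e=f$, else $0$. *)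

From HB Require Import structures.
From mathcomp Require Import all_boot.
From mathcomp Require Import boolp classical_sets topology.
Set Implicit Arguments. Unset Strict Implicit. Unset Printing Implicit Defensive.

Record digraph := Digraph {
  vert : Type;
  edge : Type;
  src : edge -> vert;
  rng : edge -> vert }.

Section GraphInverseSemigroup.
Variable E : digraph.

(* A (raw) path is a pair (v, [e1; ...; en]): for n = 0 it is the vertex v,
   otherwise it is the edge sequence e1...en, with v = s(e1). *)
Definition rawpath := (vert E * seq (edge E))%type.

Fixpoint starts_at (v : vert E) (l : seq (edge E)) : Prop :=
  if l is e :: l' then src e = v /\ starts_at (rng e) l' else True.

Fixpoint endv (v : vert E) (l : seq (edge E)) : vert E :=
  if l is e :: l' then endv (rng e) l' else v.

Definition is_path (p : rawpath) : Prop := starts_at p.1 p.2.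
Definition psource (p : rawpath) : vert E := p.1.
Definition prange (p : rawpath) : vert E := endv p.1 p.2.

Definition acyclic : Prop :=
  forall p : rawpath, is_path p -> p.2 <> [::] -> prange p <> psource p.

Lemma starts_at_cat v l1 l2 :
  starts_at v (l1 ++ l2) <-> starts_at v l1 /\ starts_at (endv v l1) l2.
Proof.
elim: l1 v => [|e l1 IH] v /=; first by tauto.
rewrite IH; tauto.
Qed.

Lemma endv_cat v l1 l2 : endv v (l1 ++ l2) = endv (endv v l1) l2.
Proof. by elim: l1 v => [|e l1 IH] v //=. Qed.

(* Elements of G(E): 0, and p q^{-1} for paths p, q with r(p) = r(q)
   (the standard normal form of elements of the graph inverse semigroup). *)
Inductive gie_raw := GZero | GElt of rawpath & rawpath.

Definition gie_wf (x : gie_raw) : Prop :=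
  match x with
  | GZero => True
  | GElt p q => is_path p /\ is_path q /\ prange p = prange q
  end.

(* (p q^{-1}) (t u^{-1}) = (p w) u^{-1}   if t = q w,
                        = p (u w)^{-1}   if q = t w,
                        = 0              otherwise. *)
Definition gmul_raw (x y : gie_raw) : gie_raw :=
  match x, y with
  | GElt p q, GElt t u =>
    if pselect (t.1 = q.1 /\ take (size q.2) t.2 = q.2) then
      GElt (p.1, p.2 ++ drop (size q.2) t.2) u
    else if pselect (q.1 = t.1 /\ take (size t.2) q.2 = t.2) then
      GElt p (u.1, u.2 ++ drop (size t.2) q.2)
    else GZero
  | _, _ => GZero
  end.

Lemma gmul_wf x y : gie_wf x -> gie_wf y -> gie_wf (gmul_raw x y).
Proof.
case: x => [|p q] //; case: y => [|t u] //.
case: p => vp lp; case: q => vq lq; case: t => vt lt; case: u => vu lu /=.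
rewrite /is_path /prange /=.
move=> [Hp [Hq Hpq]] [Ht [Hu Htu]].
destruct (pselect _) as [[Hv Htk]|Hn]; simpl.
  have Hlt : lt = lq ++ drop (size lq) lt by rewrite -{1}(cat_take_drop (size lq) lt) Htk.
  move: Ht Htu; rewrite {1 2}Hlt Hv /is_path /prange /=.
  move=> /starts_at_cat [_ Hw]; rewrite endv_cat => Htu.
  split; [apply/starts_at_cat; rewrite Hpq; split=> // | split=> //].
  by rewrite endv_cat Hpq.
destruct (pselect _) as [[Hv Htk]|Hn']; simpl => //.
have Hlq : lq = lt ++ drop (size lt) lq by rewrite -{1}(cat_take_drop (size lt) lq) Htk.
move: Hq Hpq; rewrite {1 2}Hlq Hv /is_path /prange /=.
move=> /starts_at_cat [_ Hw]; rewrite endv_cat => Hpq.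
split=> //; split.
  by apply/starts_at_cat; split=> //; rewrite -Htu.
by rewrite endv_cat -Htu.
Qed.

Definition gie : Type := {x : gie_raw | gie_wf x}.

Definition gmul (x y : gie) : gie :=
  exist _ (gmul_raw (sval x) (sval y)) (gmul_wf (svalP x) (svalP y)).

Definition gzero : gie := exist _ GZero I.

End GraphInverseSemigroup.

From HB Require Import structures.
From mathcomp Require Import all_boot.
From mathcomp Require Import boolp classical_sets topology.

Local Open Scope classical_set_scope.

(* If E is acyclic, the square of p q^-1 in G(E) is nonzero only when one of
   p, q extends the other by a closed path, i.e. when p = q; so every element
   of G(E) is either idempotent or squares to 0.  In S the set
   U = [set x | x x <> 0] is open and the idempotents form a closed set.  The
   points of G(E) in U are idempotents and are dense in U, hence U consists of
   idempotents, U = E(S) \ {0}, and E(S) = U `|` [set 0] lies in the closure of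
   E(G(E)). *)

Section AcyclicGraphInverseSemigroup.
Context {E : digraph}.

Lemma gie_val_inj : injective (@sval _ (@gie_wf E)).
Proof. by move=> [x wx] [y wy] /= xy; apply: eq_exist. Qed.

Hypothesis acyclicE : acyclic E.

Lemma acyclic_cycle_nil {v : vert E} {l w : seq (edge E)} :
  starts_at v (l ++ w) -> endv v (l ++ w) = endv v l -> w = [::].
Proof.
case: w => [//|e w] /starts_at_cat[_ path_w]; rewrite endv_cat => cycle_w.
by case: (acyclicE (endv v l, e :: w) path_w).
Qed.

Lemma acyclic_prefix_eq {p q : rawpath E} :
  is_path p -> p.1 = q.1 -> take (size q.2) p.2 = q.2 -> prange p = prange q ->
  p.2 = q.2.
Proof.
move=> path_p eq_v pre_q eq_range.
have p2E : q.2 ++ drop (size q.2) p.2 = p.2.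
  by rewrite -[RHS](cat_take_drop (size q.2)) pre_q.
have path_qw : starts_at q.1 (q.2 ++ drop (size q.2) p.2) by rewrite p2E -eq_v.
have cycle_w : endv q.1 (q.2 ++ drop (size q.2) p.2) = endv q.1 q.2.
  by rewrite p2E -[in LHS]eq_v.
by rewrite -p2E (acyclic_cycle_nil path_qw cycle_w) cats0.
Qed.

Lemma gmul_raw_sq (x : gie_raw E) :
  gie_wf x -> gmul_raw x x <> GZero E -> gmul_raw x x = x.
Proof.
case: x => [//|p q] [path_p [path_q eq_range]]; rewrite /gmul_raw.
case: pselect => [[eq_v pre_q] /= _ | ? /=].
  have eq_p2 := acyclic_prefix_eq path_p eq_v pre_q eq_range.
  by rewrite [in drop _ _]eq_p2 drop_size cats0 -surjective_pairing.
case: pselect => [[eq_v pre_p] /= _ | ? //].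
have eq_p2 := acyclic_prefix_eq path_q eq_v pre_p (esym eq_range).
by rewrite [in drop _ _]eq_p2 drop_size cats0 -surjective_pairing.
Qed.

Lemma gmul_sq_idem (g : gie E) : gmul g g <> gzero E -> gmul g g = g.
Proof.
move=> sq_neq0; apply: gie_val_inj; apply: gmul_raw_sq (svalP g) _ => sq0.
by apply: sq_neq0; apply: gie_val_inj.
Qed.

End AcyclicGraphInverseSemigroup.

Lemma closed_fixed_points (T : topologicalType) (h : T -> T) :
  hausdorff_space T -> continuous h -> closed [set x | h x = x].
Proof.
move=> hT h_cont s cl_s; apply: hT => A B A_hs B_s.
have hA_s : nbhs s (h @^-1` A) by exact: h_cont.
have [x [/= hx [Ahx Bx]]] := cl_s _ (filterI hA_s B_s).
by exists x; split=> //; rewrite -hx.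
Qed.

Section TopologicalSemigroup.
Variables (S : topologicalType) (mul : S -> S -> S).
Hypothesis mul_cont : continuous (fun xy : S * S => mul xy.1 xy.2).

Lemma continuous_square : continuous (fun x => mul x x).
Proof.
move=> x; apply: (continuous_comp (f := fun x : S => (x, x))
  (g := fun xy : S * S => mul xy.1 xy.2)); last exact: mul_cont.
by apply: cvg_pair; apply: cvg_id.
Qed.

Hypothesis hS : hausdorff_space S.

Lemma closed_idempotents : closed [set x | mul x x = x].
Proof. exact: closed_fixed_points continuous_square. Qed.

Lemma open_square_neq (z : S) : open [set x | mul x x <> z].
Proof.
apply: (@open_comp _ _ (fun x => mul x x) (~` [set z])).
  by move=> x _; apply: continuous_square.
by rewrite openC; apply/accessible_closed_set1/hausdorff_accessible.
Qed.

End TopologicalSemigroup.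

Section DenseImage.
Context {G : Type} {gm : G -> G -> G} {g0 : G}.
Hypothesis gm_sq_idem : forall g, gm g g <> g0 -> gm g g = g.
Context {S : topologicalType} {mul : S -> S -> S} {f : G -> S}.
Hypotheses (hS : hausdorff_space S)
  (mul_cont : continuous (fun xy : S * S => mul xy.1 xy.2))
  (f_mul : forall x y, f (gm x y) = mul (f x) (f y))
  (f_dense : closure (range f) = setT).

Lemma gm_sq0 : gm g0 g0 = g0.
Proof. by apply: contrapT => sq_neq; apply/sq_neq/gm_sq_idem. Qed.

Lemma square_neq0_sub_closure_idempotents :
  [set x | mul x x <> f g0] `<=` closure (f @` [set g | gm g g = g]).
Proof.
move=> s sq_s B B_s.
have U_s : nbhs s [set x | mul x x <> f g0].
  by apply: open_nbhs_nbhs; split=> //; apply: open_square_neq.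
have : closure (range f) s by rewrite f_dense.
move=> /(_ _ (filterI U_s B_s)) [_ [[g _ <-] [/= sq_g Bfg]]].
exists (f g); split=> //; exists g => //.
by apply: gm_sq_idem => sq0; apply: sq_g; rewrite -f_mul sq0.
Qed.

Lemma idempotentsE :
  [set x | mul x x = x] = closure (f @` [set g | gm g g = g]).
Proof.
apply/seteqP; split=> [e idem_e | ]; last first.
  rewrite [X in _ `<=` X](closure_id _).1; last exact: closed_idempotents.
  by apply: closureS => _ [g idem_g <-]; rewrite /= -f_mul idem_g.
have [-> | e_neq0] := pselect (e = f g0).
  by apply: subset_closure; exists g0 => //; apply: gm_sq0.
by apply: square_neq0_sub_closure_idempotents; rewrite /= idem_e.
Qed.

Lemma idempotents_setD0E :
  [set x | mul x x = x] `\ f g0 = [set x | mul x x <> f g0].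
Proof.
apply/seteqP; split=> [x [/= -> //] | x sq_x].
have : closure (f @` [set g | gm g g = g]) x.
  exact: square_neq0_sub_closure_idempotents.
rewrite -idempotentsE /= => idem_x.
by split=> //; rewrite /= -idem_x.
Qed.

Lemma open_idempotents_setD0 : open ([set x | mul x x = x] `\ f g0).
Proof. by rewrite idempotents_setD0E; apply: open_square_neq. Qed.

End DenseImage.

Theorem lemma4p3 (E : digraph) (hE : acyclic E)
  (S : topologicalType) (mul : S -> S -> S)
  (hS : hausdorff_space S)
  (mulA : associative mul)
  (mul_cont : continuous (fun xy : S * S => mul xy.1 xy.2))
  (f : gie E -> S) (f_inj : injective f)
  (f_mul : forall x y : gie E, f (gmul x y) = mul (f x) (f y))
  (f_dense : closure (range f) = setT) :
  [set x : S | mul x x = x] = closure (f @` [set x : gie E | gmul x x = x]) /\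
  open ([set x : S | mul x x = x] `\ f (gzero E)).
Proof.
have sq_idem := gmul_sq_idem hE.
split; first exact: (idempotentsE sq_idem).
exact: (open_idempotents_setD0 sq_idem).
Qed.
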